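(* For every positive integer $t$ there exist positive integers $t'$ and $u$ such that every semilinear graph of complexity $t$ is semilinear* of complexity $(t',u)$.
   Context: A function $f:\mathbb{R}^{m}\to\mathbb{R}$ is linear if $f(\mathbf{x})=b+\sum_{i=1}^m a_i\mathbf{x}(i)$ for some reals $a_1,\dots,a_m,b$. A finite simple graph $G$ is semilinear of complexity $t$ if $V(G)\subset\mathbb{R}^d$ for some positive integer $d$, and there are $t$ linear functions $f_1,\dots,f_t:\mathbb{R}^d\times\mathbb{R}^d\to\mathbb{R}$ and a Boolean function $\phi:\{\mathrm{F},\mathrm{T}\}^{3t}\to\{\mathrm{F},\mathrm{T}\}$ such that for distinct $\mathbf{x},\mathbf{y}\in V(G)$, $\{\mathbf{x},\mathbf{y}\}$ is an edge iff $\phi\big(\{f_i(\mathbf{x},\mathbf{y})<0,\ f_i(\mathbf{x},\mathbf{y})\leq 0,\ f_i(\mathbf{x},\mathbf{y})=0\}_{i\in[t]}\big)=\mathrm{T}$ (assumed symmetric in $\mathbf{x},\mathbf{y}$). $G$ is semilinear* of complexity $(t,u)$ if $V(G)\subset\mathbb{R}^d$ and there are $tu$ linear functions $f_{i,j}:\mathbb{R}^d\times\mathbb{R}^d\to\mathbb{R}$, $(i,j)\in[u]\times[t]$, such that for distinct $\mathbf{x},\mathbf{y}\in V(G)$, $\{\mathbf{x},\mathbf{y}\}$ is an edge iff $\bigvee_{i\in[u]}\bigwedge_{j\in[t]}\{f_{i,j}(\mathbf{x},\mathbf{y})<0\}$ is true (assumed symmetric in $\mathbf{x},\mathbf{y}$).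 *)

From HB Require Import structures.
From mathcomp Require Import all_boot all_order all_algebra.
From mathcomp Require Import Rstruct.
From Stdlib Require Import Reals.
Set Implicit Arguments. Unset Strict Implicit. Unset Printing Implicit Defensive.
Import Order.TTheory GRing.Theory Num.Theory.
Local Open Scope ring_scope.

Notation point d := 'rV[R]_d.

(* A linear function f : R^d x R^d -> R,
   f(x,y) = b + sum_i a_i x(i) + sum_i c_i y(i),
   is given by its coefficients ((a, c), b). *)
Definition linfun (d : nat) : Type := (point d * point d * R)%type.

Definition lin_eval (d : nat) (f : linfun d) (x y : point d) : R :=
  f.2 + \sum_(i < d) f.1.1 0 i * x 0 i + \sum_(i < d) f.1.2 0 i * y 0 i.

(* A finite simple graph with V(G) ⊂ R^d is given by a finite vertex type T,
   an injective placement p : T -> R^d, and a symmetric irreflexive edge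
   relation e on T. *)
Definition simple_graph (T : finType) (e : rel T) : Prop :=
  symmetric e /\ irreflexive e.

(* Semilinear of complexity t: t linear functions and a Boolean function
   phi : {F,T}^{3t} -> {F,T} (inputs indexed by i in [t], each giving the
   triple (f_i < 0, f_i <= 0, f_i = 0)). *)
Definition semilinear_graph (t d : nat) (T : finType) (p : T -> point d) (e : rel T)
  : Prop :=
  exists (f : 'I_t -> linfun d)
         (phi : {ffun 'I_t -> bool * bool * bool} -> bool),
    forall x y : T, x != y ->
      e x y = phi [ffun i => (lin_eval (f i) (p x) (p y) < 0,
                              lin_eval (f i) (p x) (p y) <= 0,
                              lin_eval (f i) (p x) (p y) == 0)].

Definition semilinear_star_graph (t u d : nat) (T : finType) (p : T -> point d)
  (e : rel T) : Prop :=
  exists f : 'I_u -> 'I_t -> linfun d,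
    forall x y : T, x != y ->
      e x y = [exists i : 'I_u, [forall j : 'I_t,
                 lin_eval (f i j) (p x) (p y) < 0]].

(* Pick eps > 0 below every nonzero |f_i(x, y)| over the finitely many vertex
   pairs.  The edge relation is the union, over the sign patterns in {<0, =0, >0}^t
   accepted by phi, of the pairs realizing that pattern, and each pattern is a
   conjunction of 2t strict inequalities: f_i < 0 and -f_i < 0 for the strict
   signs, f_i - eps < 0 and -f_i - eps < 0 for f_i = 0.  One extra constant
   conjunct, -1 < 0 or 1 < 0, switches a pattern on or off according to phi,
   so t' = 2t + 1 and u = 3^t work. *)

From Pilot Require Import Defs.
From HB Require Import structures.
From mathcomp Require Import all_boot all_order all_algebra.
From mathcomp Require Import Rstruct.
From mathcomp Require Import ring lra.

Set Implicit Arguments. Unset Strict Implicit. Unset Printing Implicit Defensive.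
Import Order.TTheory GRing.Theory Num.Theory.
Local Open Scope ring_scope.

Lemma forall_enum_val (X : finType) (P : pred X) :
  [forall j : 'I_#|X|, P (enum_val j)] = [forall x, P x].
Proof.
apply/forallP/forallP => [H x|H j]; last exact: H.
by rewrite -(enum_rankK x); apply: H.
Qed.

Lemma exists_enum_val (X : finType) (P : pred X) :
  [exists j : 'I_#|X|, P (enum_val j)] = [exists x, P x].
Proof.
apply/existsP/existsP => [[j Pj]|[x Px]]; first by exists (enum_val j).
by exists (enum_rank x); rewrite enum_rankK.
Qed.

Lemma forall_bool (P : pred bool) : [forall b, P b] = P true && P false.
Proof. by apply/forallP/andP => [Pb | [Pt Pf] []]. Qed.

Section SignPatterns.
Variable F : realFieldType.

Lemma exists_lt_nonzero_norm (I : finType) (v : I -> F) :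
  exists2 eps : F, 0 < eps & forall i, v i != 0 -> eps < `|v i|.
Proof.
pose m := \big[Order.min/1]_i (if v i == 0 then 1 else `|v i|).
have m_gt0 : 0 < m.
  by apply: lt_bigmin => // i _; case: eqP => // /eqP; rewrite normr_gt0.
exists (m / 2) => [|i vi_neq0]; first by rewrite divr_gt0.
have : m <= (if v i == 0 then 1 else `|v i|) by apply: bigmin_le.
rewrite (negbTE vi_neq0); lra.
Qed.

Definition sign3 (v : F) : 'I_3 :=
  inord (if v < 0 then 0%N else if v == 0 then 1%N else 2%N).

Definition sign_bits (s : 'I_3) : bool * bool * bool :=
  ((s : nat) == 0%N, (s <= 1)%N, (s : nat) == 1%N).

Lemma val_sign3 v :
  (sign3 v : nat) = if v < 0 then 0%N else if v == 0 then 1%N else 2%N.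
Proof. by rewrite inordK //; case: ifP => //; case: ifP. Qed.

Lemma sign_bits_sign3 v : sign_bits (sign3 v) = (v < 0, v <= 0, v == 0).
Proof. by rewrite /sign_bits val_sign3 le_eqVlt; case: ltrgtP. Qed.

(* With [(a, c) := sign_form eps s b] and [eps] below every nonzero [|v|], the
   sign class [s] of [v] is cut out by [a * v + c < 0] for both values of [b]:
   [v < 0] twice, [v = 0] as [v - eps < 0] and [-v - eps < 0], [-v < 0] twice. *)
Definition sign_form (eps : F) (s : 'I_3) (b : bool) : F * F :=
  match (s : nat) with
  | 0%N => (1, 0)
  | 1%N => (if b then 1 else -1, - eps)
  | _ => (-1, 0)
  end.

Lemma sign_form_lt0E eps s v : 0 < eps -> (v != 0 -> eps < `|v|) ->
  [forall b, (sign_form eps s b).1 * v + (sign_form eps s b).2 < 0] = (sign3 v == s).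
Proof.
move=> eps_gt0 v_sep; rewrite forall_bool -val_eqE /= val_sign3 /sign_form.
have [v_lt0|v_gt0|->] := ltrgtP v 0;
  [have := v_sep (ltr0_neq0 v_lt0); rewrite ltr0_norm // => eps_lt_v
  |have := v_sep (lt0r_neq0 v_gt0); rewrite gtr0_norm // => eps_lt_v|];
  clear v_sep; case: s => [[|[|[|n]]] //= _];
  first [by apply/andP; split; lra | by apply/negbTE/negP => /andP[? ?]; lra].
Qed.

End SignPatterns.

Definition lin_affine d (a c : Rdefinitions.R) (f : Defs.linfun d) : Defs.linfun d :=
  ((a *: f.1.1, a *: f.1.2), a * f.2 + c).

Lemma lin_eval_affine d a c (f : Defs.linfun d) x y :
  lin_eval (lin_affine a c f) x y = a * lin_eval f x y + c.
Proof.
rewrite /lin_eval !RplusE /=.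
under eq_bigr do rewrite mxE -mulrA.
under [X in _ + X = _]eq_bigr do rewrite mxE -mulrA.
rewrite -!mulr_sumr; ring.
Qed.

Definition lin_cst d (c : Rdefinitions.R) : Defs.linfun d := ((0, 0), c).

Lemma lin_eval_cst d c (x y : point d) : lin_eval (lin_cst d c) x y = c.
Proof. by rewrite /lin_eval !RplusE !big1 ?addr0 // => i _; rewrite mxE mul0r. Qed.

Section SemilinearStar.
Variables (d : nat) (T : finType) (p : T -> point d) (e : rel T).

Lemma semilinear_star_of_dnf (I J : finType) (g : I -> J -> Defs.linfun d) :
  (forall x y, x != y ->
     e x y = [exists i, [forall j, lin_eval (g i j) (p x) (p y) < 0]]) ->
  semilinear_star_graph #|J| #|I| p e.
Proof.
move=> e_dnf; exists (fun i j => g (enum_val i) (enum_val j)) => x y xy.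
rewrite e_dnf // -(exists_enum_val (fun i => [forall j, _])).
apply: eq_existsb => i.
exact: esym (forall_enum_val (fun j => lin_eval (g (enum_val i) j) (p x) (p y) < 0)).
Qed.

Lemma semilinear_sign_dnf t : semilinear_graph t p e ->
  exists g : {ffun 'I_t -> 'I_3} -> option ('I_t * bool) -> Defs.linfun d,
    forall x y, x != y ->
      e x y = [exists s, [forall j, lin_eval (g s j) (p x) (p y) < 0]].
Proof.
move=> [f [phi e_phi]].
pose v i x y := lin_eval (f i) (p x) (p y).
have [eps eps_gt0 eps_sep] :=
  exists_lt_nonzero_norm (fun k : 'I_t * T * T => v k.1.1 k.1.2 k.2).
pose pattern (s : {ffun 'I_t -> 'I_3}) := [ffun i => sign_bits (s i)].
pose guard s := lin_cst d (if phi (pattern s) then -1 else 1).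
pose test (s : {ffun 'I_t -> 'I_3}) i b :=
  lin_affine (sign_form eps (s i) b).1 (sign_form eps (s i) b).2 (f i).
exists (fun s j => if j is Some (i, b) then test s i b else guard s) => x y xy.
pose s0 := [ffun i => sign3 (v i x y)].
have -> : e x y = phi (pattern s0).
  by rewrite e_phi //; congr phi; apply/ffunP => i; rewrite !ffunE sign_bits_sign3.
have guardE s : (lin_eval (guard s) (p x) (p y) < 0) = phi (pattern s).
  by rewrite lin_eval_cst; case: (phi _); rewrite ?ltrN10 ?ltr10.
have testE s i : [forall b, lin_eval (test s i b) (p x) (p y) < 0] = (s0 i == s i).
  under eq_forallb do rewrite lin_eval_affine.
  by rewrite (sign_form_lt0E _ eps_gt0 (eps_sep (i, x, y))) ffunE.
have conjE s : [forall j, lin_eval (if j is Some (i, b) then test s i b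
                                     else guard s) (p x) (p y) < 0]
               = phi (pattern s) && (s == s0).
  apply/forallP/andP => [all_lt0 | [phi_s /eqP s_s0] [[i b]|]].
  - split; first by rewrite -guardE; apply: all_lt0 None.
    apply/eqP/ffunP => i; apply/esym/eqP; rewrite -testE.
    by apply/forallP => b; apply: all_lt0 (Some (i, b)).
  - by have /forallP := testE s i; rewrite s_s0 eqxx; apply.
  - by rewrite guardE.
rewrite (eq_existsb conjE).
apply/idP/existsP => [phi_s0 | [s /andP[phi_s /eqP s_s0]]]; last by rewrite -s_s0.
by exists s0; rewrite phi_s0 eqxx.
Qed.

End SemilinearStar.

Theorem lemma2p1 :
  forall t : nat, (0 < t)%N ->
  exists t' u : nat, (0 < t')%N /\ (0 < u)%N /\
    forall (d : nat) (T : finType) (p : T -> point d) (e : rel T),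
      (0 < d)%N -> injective p -> simple_graph e ->
      semilinear_graph t p e -> semilinear_star_graph t' u p e.
Proof.
move=> t _.
exists #|{: option ('I_t * bool)}|, #|{: {ffun 'I_t -> 'I_3}}|.
split; first by apply/card_gt0P; exists None.
split; first by apply/card_gt0P; exists [ffun=> ord0].
move=> d T p e _ _ _ /semilinear_sign_dnf [g e_dnf].
exact: semilinear_star_of_dnf e_dnf.
Qed.
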